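(* Let $\pi=\pi_1\pi_2\cdots\pi_n\in S_n$ be a permutation with exactly $k$ descents. For each $\mathscr H\in\mathcal H_{\{0,2\}}(\pi)$, the tuple $\varphi(\mathscr H)=(\widehat q_0(\mathscr H),\widehat q_1(\mathscr H),\ldots,\widehat q_k(\mathscr H))$ is a composition of $n-k$ into $k+1$ positive parts. The map $\varphi\colon\mathcal H_{\{0,2\}}(\pi)\to \mathrm{Comp}_{k+1}(n-k)$ is injective.
   Context: $S_n$ is the set of permutations of $[n]=\{1,\ldots,n\}$, written in one-line notation. A descent of $\pi$ is an index $i\in[n-1]$ with $\pi_i>\pi_{i+1}$. $\mathrm{Comp}_a(b)$ denotes the set of compositions of $b$ into $a$ positive parts. Diagram and hooks: the diagram of $\pi$ is the set of points $(i,\pi_i)$ in the plane. A hook $H$ is determined by indices $i<j$ with $\pi_i<\pi_j$; it is the union of the vertical segment from $(i,\pi_i)$ to $(i,\pi_j)$ and the horizontal segment from $(i,\pi_j)$ to $(j,\pi_j)$. Its southwest endpoint is ${}_eH=(i,\pi_i)$ and its northeast endpoint is $H^e=(j,\pi_j)$. Its top part is the segment from $(i+1/2,\pi_j)$ to $(j,\pi_j)$. Valid hook configurations: an $m$-tuple $\mathscr H=(H_1,\ldots,H_m)$ of hooks is a valid hook configuration of $\pi$ if: (a) if ${}_eH_\ell=(i_\ell,\pi_{i_\ell})$ then $i_1<i_2<\cdots<i_m$; (b) for every descent $i$ of $\pi$, $(i,\pi_i)={}_eH_\ell$ for some $\ell$; (c) if $(j,\pi_j)=H^e_\ell$ for some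 $\ell$, then there exist $\ell',\ell''$ such that the $x$-coordinate of ${}_eH_{\ell'}$ is a descent of $\pi$, ${}_eH_{\ell''}=(j-1,\pi_{j-1})$, and $H^e_{\ell'}=H^e_{\ell''}=(j,\pi_j)$; (d) if ${}_eH_\ell=(i,\pi_i)$, $H_\ell^e=(j,\pi_j)$, ${}_eH_{\ell'}=(i',\pi_{i'})$, $H_{\ell'}^e=(j',\pi_{j'})$, $\pi_j\le\pi_{j'}$ and $|[i,j]\cap[i',j']|>1$, then $[i,j]\subseteq[i',j']$. Let $NE(\mathscr H)=\{H_1^e,\ldots,H_m^e\}$, and $|\mathscr H|=m$. $\mathcal H_{\{0,2\}}(\pi)$ is the set of valid hook configurations of $\pi$ in which each point of $NE(\mathscr H)$ is the northeast endpoint of exactly two hooks. Coloring: given $\mathscr H=(H_1,\ldots,H_m)$, use colors $c_0,\ldots,c_m$, giving $H_\ell$ the color $c_\ell$. A point $(k,\pi_k)\notin NE(\mathscr H)$ is colored as follows: move upward from $(k,\pi_k)$ (ignoring any hook whose southwest endpoint is $(k,\pi_k)$) until hitting the top part of a hook, and give the point the color of that hook; if several hooks are hit at once, use the one whose southwest endpoint is farthest to the right; if no top part is hit, use $c_0$. A point $(k,\pi_k)\in NE(\mathscr H)$ gets color $c_r$ where $r$ is the largest index with $H_r^e=(k,\pi_k)$. Let $q_t(\mathscr H)$ be the number of points colored $c_t$. Let $\Theta(\mathscr H)$ be the set of $i\in\{0,1,\ldots,m\}$ such that $c_i$ is not the color of any point of $NE(\mathscr H)$; for $\mathscr H\in\mathcal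 H_{\{0,2\}}(\pi)$ with $\pi$ having $k$ descents, $|\Theta(\mathscr H)|=k+1$. Writing $\Theta(\mathscr H)=\{i_0<i_1<\cdots<i_k\}$, set $\widehat q_t(\mathscr H)=q_{i_t}(\mathscr H)$. *)

(* Conventions:
   - a permutation pi of [n] is a sequence s : seq nat with perm_eq s (iota 1 n);
     positions are 1-based: pi_i = pv s i = nth 0 s (i-1).
   - a hook is a pair (i, j) of positions (southwest x-coord, northeast x-coord).
   - a hook configuration (H_1,...,H_m) is a seq of hooks; H_l = nth (0,0) H (l-1). *)
From mathcomp Require Import all_boot.
Set Implicit Arguments. Unset Strict Implicit. Unset Printing Implicit Defensive.

Definition pv (s : seq nat) (i : nat) : nat := nth 0 s i.-1.

Definition is_descent (s : seq nat) (i : nat) : bool :=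
  (1 <= i < size s) && (pv s i > pv s i.+1).

Definition ndesc (s : seq nat) : nat := count (is_descent s) (iota 1 (size s)).

Definition is_hook (s : seq nat) (h : nat * nat) : bool :=
  (1 <= h.1) && (h.1 < h.2) && (h.2 <= size s) && (pv s h.1 < pv s h.2).

Definition hk (H : seq (nat * nat)) (l : nat) : nat * nat := nth (0, 0) H l.-1.
Definition sw (H : seq (nat * nat)) (l : nat) : nat := (hk H l).1.
Definition ne (H : seq (nat * nat)) (l : nat) : nat := (hk H l).2.

Definition idx (H : seq (nat * nat)) : seq nat := iota 1 (size H).

Definition inter_card (n a b c d : nat) : nat :=
  count (fun x => (a <= x <= b) && (c <= x <= d)) (iota 1 n).

Definition is_VHC (s : seq nat) (H : seq (nat * nat)) : bool :=
  let n := size s in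
  all (is_hook s) H &&
  sorted ltn (map fst H) &&
  all (fun i => is_descent s i ==> has (fun l => sw H l == i) (idx H)) (iota 1 n) &&
  all (fun l => let j := ne H l in
        has (fun l' => is_descent s (sw H l') && (ne H l' == j)) (idx H) &&
        has (fun l'' => (sw H l'' == j.-1) && (ne H l'' == j)) (idx H)) (idx H) &&
  (* (d), read with pi_j < pi_j' (i.e. distinct NE endpoints) *)
  all (fun l => all (fun l' =>
        (pv s (ne H l) < pv s (ne H l')) &&
        (1 < inter_card n (sw H l) (ne H l) (sw H l') (ne H l'))
        ==> (sw H l' <= sw H l) && (ne H l <= ne H l')) (idx H)) (idx H).

Definition inNE (H : seq (nat * nat)) (x : nat) : bool :=
  has (fun l => ne H l == x) (idx H).

Definition is_VHC02 (s : seq nat) (H : seq (nat * nat)) : bool :=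
  is_VHC s H &&
  all (fun l => count (fun l' => ne H l' == ne H l) (idx H) == 2) (idx H).

(* moving upward from (k, pi_k), the top part of hook l (from (i+1/2, pi_j) to
   (j, pi_j)) is hit *)
Definition hits (s : seq nat) (H : seq (nat * nat)) (k l : nat) : bool :=
  (sw H l != k) && (sw H l < k <= ne H l) && (pv s k < pv s (ne H l)).

Definition has_color (s : seq nat) (H : seq (nat * nat)) (k t : nat) : bool :=
  if inNE H k then
    (t \in idx H) && (ne H t == k) &&
    all (fun l => (ne H l == k) ==> (l <= t)) (idx H)
  else if ~~ has (hits s H k) (idx H) then t == 0
  else (t \in idx H) && hits s H k t &&
       all (fun l => hits s H k l ==>
             ((pv s (ne H t) < pv s (ne H l)) ||
              ((pv s (ne H t) == pv s (ne H l)) && (sw H l <= sw H t)))) (idx H).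

Definition q (s : seq nat) (H : seq (nat * nat)) (t : nat) : nat :=
  count (fun k => has_color s H k t) (iota 1 (size s)).

Definition Theta (s : seq nat) (H : seq (nat * nat)) : seq nat :=
  [seq t <- iota 0 (size H).+1 |
     ~~ has (fun k => inNE H k && has_color s H k t) (iota 1 (size s))].

Definition phi (s : seq nat) (H : seq (nat * nat)) : seq nat :=
  map (q s H) (Theta s H).

Definition is_comp (a b : nat) (c : seq nat) : bool :=
  (size c == a) && all (fun x => 0 < x) c && (sumn c == b).

(* In a configuration of H_{0,2}(pi) every northeast endpoint j is reached by
   exactly two hooks, one from a descent and one from j-1, and every hook is of one
   of these two kinds.  So NE(H) has k points and Theta(H) consists of c_0 and the
   colours of the k descent hooks.  A point outside NE(H) receives exactly one
   colour of Theta(H) and a point of NE(H) none, so the parts of phi(H) add up to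
   n - k; they are positive because the point 1 gets c_0 and the point d+1 gets the
   colour of the hook from the descent d.  The points of that colour are those
   strictly inside the hook and under no descent hook nested in it; their number
   grows strictly with the northeast endpoint of the hook.  Reading the descents
   from right to left, phi(H) therefore determines every descent hook, hence H. *)

From mathcomp Require Import all_boot zify.
Set Implicit Arguments. Unset Strict Implicit. Unset Printing Implicit Defensive.

Lemma sumn_count_exchange (T1 T2 : Type) (P : T1 -> T2 -> bool) (X : seq T1) (Y : seq T2) :
  sumn [seq count (P^~ y) X | y <- Y] = sumn [seq count (P x) Y | x <- X].
Proof.
rewrite !sumnE !big_map; under eq_bigr do rewrite -sum1_count big_mkcond.
by rewrite exchange_big; apply: eq_bigr => x _; rewrite -sum1_count [RHS]big_mkcond.
Qed.

Lemma count_leq_uniq_subset (T : eqType) (P : pred T) (s1 s2 : seq T) :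
  uniq s1 -> {subset s1 <= s2} -> count P s1 <= count P s2.
Proof.
move=> s1_uniq sub12; rewrite -!size_filter; apply: uniq_leq_size; first exact: filter_uniq.
by move=> x; rewrite !mem_filter => /andP[-> /sub12].
Qed.

Lemma sub_in_count_ltn (T : eqType) (P Q : pred T) (s : seq T) :
  {in s, forall x, P x -> Q x} -> (exists2 y, y \in s & Q y && ~~ P y) ->
  count P s < count Q s.
Proof.
move=> PQ [y ys QnPy]; rewrite -[count Q s]size_filter -(count_predC P) !count_filter.
rewrite (@eq_in_count _ (predI P Q) P) => [|x /PQ /=]; last by case: (P x) => [/(_ isT) ->|].
by rewrite -[X in X < _]addn0 ltn_add2l -has_count; apply/hasP; exists y; rewrite //= andbC.
Qed.

Lemma count_eq1 (T : eqType) (P : pred T) (s : seq T) (x : T) :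
  uniq s -> x \in s -> P x -> {in s, forall y, P y -> y = x} -> count P s = 1.
Proof.
move=> s_uniq xs Px Puniq; rewrite (@eq_in_count _ _ (pred1 x)) ?count_uniq_mem ?xs //.
by move=> y ys /=; apply/idP/eqP => [/(Puniq y ys)|->].
Qed.

Lemma uniq_map_inj_in (T1 T2 : eqType) (f : T1 -> T2) (s : seq T1) :
  uniq (map f s) -> {in s &, injective f}.
Proof.
elim: s => //= x s IH /andP[fx_notin fs_uniq] y z; rewrite !inE.
case/predU1P=> [->|ys] /predU1P[->|zs] // fyz; last exact: IH.
- by rewrite fyz map_f in fx_notin.
- by rewrite -fyz map_f in fx_notin.
Qed.

Lemma inter_card_gt1 (n a b c d y : nat) :
  1 <= y -> y < n -> a <= y < b -> c <= y < d -> 1 < inter_card n a b c d.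
Proof.
move=> y_gt0 y_ltn yab ycd; rewrite /inter_card.
have yy_uniq : uniq [:: y; y.+1] by rewrite /= inE andbT; lia.
apply: leq_trans (count_leq_uniq_subset _ yy_uniq _); first by rewrite /=; lia.
by move=> x; rewrite !inE mem_iota => /orP[] /eqP ->; lia.
Qed.

Lemma eq_map_at_fst (T1 T2 U : eqType) (f g : T1 * T2 -> U) (X Y : seq (T1 * T2))
    (x y : T1 * T2) :
  map fst X = map fst Y -> map f X = map g Y -> uniq (map fst Y) ->
  x \in X -> y \in Y -> x.1 = y.1 -> f x = g y.
Proof.
move=> eq_fst eq_fg fstY_uniq xX yY xy.
have eq_pairs : [seq (h.1, f h) | h <- X] = [seq (h.1, g h) | h <- Y].
  elim: X Y eq_fst eq_fg {xX yY fstY_uniq} => [|x' X IH] [|y' Y] //= [-> eX] [-> eY].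
  by rewrite (IH Y).
have /mapP[y' y'Y [fst_y' ->]] : (x.1, f x) \in [seq (h.1, g h) | h <- Y].
  by rewrite -eq_pairs map_f.
by rewrite (uniq_map_inj_in fstY_uniq y'Y yY) // -fst_y'.
Qed.

Definition descent_hooks (s : seq nat) (H : seq (nat * nat)) : seq (nat * nat) :=
  [seq h <- H | is_descent s h.1].

(* By [has_color_descent], these are the points coloured by the descent hook (d, j). *)
Definition free (s : seq nat) (H : seq (nat * nat)) (d j x : nat) : bool :=
  (d < x < j) &&
  all (fun h => is_descent s h.1 && (d < h.1 < j) ==> ~~ (h.1 < x <= h.2)) H.

Definition nfree (s : seq nat) (H : seq (nat * nat)) (h : nat * nat) : nat :=
  count (free s H h.1 h.2) (iota 1 (size s)).

(* [lia] becomes very slow when the context holds boolean facts about sequences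
   and configurations, which it cannot use anyway. *)
Ltac lia_nat :=
  repeat match goal with
  | h : is_true (is_VHC02 _ _) |- _ => clear h
  | h : is_true (uniq _) |- _ => clear h
  | h : is_true (_ \in _) |- _ => clear h
  | h : is_true (all _ _) |- _ => clear h
  | h : is_true (has _ _) |- _ => clear h
  | h : is_true (~~ has _ _) |- _ => clear h
  | h : is_true (is_descent _ _) |- _ => clear h
  | h : is_true (~~ is_descent _ _) |- _ => clear h
  | h : is_true (inNE _ _) |- _ => clear h
  | h : is_true (~~ inNE _ _) |- _ => clear h
  | h : is_true (free _ _ _ _ _) |- _ => clear h
  | h : is_true (hits _ _ _ _) |- _ => clear h
  | h : is_true (has_color _ _ _ _) |- _ => clear h
  | h : forall _, _ |- _ => clear h
  | h : _ = false |- _ => clear h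
  end; lia.

Lemma map_hk_idx (H : seq (nat * nat)) : map (hk H) (idx H) = H.
Proof.
rewrite /idx /hk -[1]/(1 + 0) iotaDl -map_comp.
by rewrite (eq_map (_ : _ =1 nth (0, 0) H)) // -/(mkseq _ _) mkseq_nth.
Qed.

Lemma mem_idx (H : seq (nat * nat)) (l : nat) : (l \in idx H) = (1 <= l <= size H).
Proof. by rewrite /idx mem_iota; lia. Qed.

Lemma hkE (H : seq (nat * nat)) (l : nat) : hk H l = (sw H l, ne H l).
Proof. by rewrite /sw /ne; case: (hk H l). Qed.

Lemma mem_hk (H : seq (nat * nat)) (l : nat) : l \in idx H -> (sw H l, ne H l) \in H.
Proof. by move=> li; rewrite -hkE -[X in _ \in X]map_hk_idx map_f. Qed.

Lemma hk_idxP (H : seq (nat * nat)) (a b : nat) :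
  (a, b) \in H -> exists2 l, l \in idx H & sw H l = a /\ ne H l = b.
Proof.
by rewrite -{1}(map_hk_idx H) => /mapP[l li eab]; exists l; rewrite // /sw /ne -eab.
Qed.

Lemma pv_inj (s : seq nat) (i j : nat) : uniq s -> pv s i = pv s j ->
  1 <= i <= size s -> 1 <= j <= size s -> i = j.
Proof.
rewrite /pv => s_uniq /eqP eq_pv i_range j_range.
have lt_i : i.-1 < size s by lia.
have lt_j : j.-1 < size s by lia.
by move: eq_pv; rewrite (nth_uniq 0 lt_i lt_j s_uniq) => /eqP; lia_nat.
Qed.

Section HookConfiguration.

Variables (s : seq nat) (H : seq (nat * nat)).
Hypotheses (s_uniq : uniq s) (H02 : is_VHC02 s H).

Lemma hookP (a b : nat) :
  (a, b) \in H -> [/\ 1 <= a, a < b, b <= size s & pv s a < pv s b].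
Proof.
case/andP: H02 => /andP[/andP[/andP[/andP[/allP hooks _] _] _] _] _.
by move=> /hooks; rewrite /is_hook -!andbA => /and4P[].
Qed.

Lemma sorted_fst_hooks : sorted ltn (map fst H).
Proof. by case/andP: H02 => /andP[/andP[/andP[/andP[]]]]. Qed.

Lemma descent_hook (i : nat) : is_descent s i -> exists b, (i, b) \in H.
Proof.
case/andP: H02 => /andP[/andP[/andP[_ /allP desc_sw] _] _] _ di.
have /andP[/andP[i_gt0 i_lt] _] := di.
have /implyP/(_ di)/hasP[l li /eqP <-] : is_descent s i ==> has (fun l => sw H l == i) (idx H).
  by apply: desc_sw; rewrite mem_iota; lia_nat.
by exists (ne H l); apply: mem_hk.
Qed.

Lemma ne_descent_hook (a b : nat) :
  (a, b) \in H -> exists2 d, is_descent s d & (d, b) \in H.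
Proof.
case/andP: H02 => /andP[/andP[_ /allP ends] _] _ /hk_idxP[l li [_ <-]].
have /andP[/hasP[l' l'i /andP[d /eqP <-]] _] := ends l li.
by exists (sw H l'); last apply: mem_hk.
Qed.

Lemma ne_adjacent_hook (a b : nat) : (a, b) \in H -> (b.-1, b) \in H.
Proof.
case/andP: H02 => /andP[/andP[_ /allP ends] _] _ /hk_idxP[l li [_ <-]].
have /andP[_ /hasP[l' l'i /andP[/eqP <- /eqP <-]]] := ends l li.
exact: mem_hk.
Qed.

Lemma hooks_nested (a b c d : nat) : (a, b) \in H -> (c, d) \in H ->
  pv s b < pv s d -> 1 < inter_card (size s) a b c d -> c <= a /\ b <= d.
Proof.
case/andP: H02 => /andP[_ /allP nest] _ /hk_idxP[l li [<- <-]] /hk_idxP[l' l'i [<- <-]] lt2 gt1.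
by have /allP/(_ l' l'i) := nest l li; rewrite lt2 gt1 => /andP[-> ->].
Qed.

Lemma count_hooks_ending_at (a b : nat) :
  (a, b) \in H -> count (fun h => h.2 == b) H = 2.
Proof.
case/andP: H02 => _ /allP twice /hk_idxP[l li [_ <-]].
by rewrite -[X in count _ X](map_hk_idx H) count_map -(eqP (twice l li)).
Qed.

Lemma uniq_fst_hooks : uniq (map fst H).
Proof. by apply: sorted_uniq sorted_fst_hooks; [exact: ltn_trans | exact: ltnn]. Qed.

Lemma fst_hook_inj : {in H &, injective fst}.
Proof. exact: uniq_map_inj_in uniq_fst_hooks. Qed.

Lemma sw_ltn (l l' : nat) : l \in idx H -> l' \in idx H -> l < l' -> sw H l < sw H l'.
Proof.
rewrite !mem_idx => l_range l'_range lt_ll'.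
have lt_l : l.-1 < size H by lia_nat.
have lt_l' : l'.-1 < size H by lia_nat.
have := sorted_ltn_nth ltn_trans 0 sorted_fst_hooks; rewrite size_map.
by move=> /(_ l.-1 l'.-1 lt_l lt_l'); rewrite !(nth_map (0, 0)) //; apply; lia_nat.
Qed.

Lemma ltn_sw (l l' : nat) : l \in idx H -> l' \in idx H -> (sw H l < sw H l') = (l < l').
Proof.
move=> li l'i; case: (ltngtP l l') => [|lt_l'l|->]; [exact: sw_ltn | | exact: ltnn].
by apply/negbTE; rewrite -leqNgt ltnW // sw_ltn.
Qed.

Lemma sw_inj (l l' : nat) : l \in idx H -> l' \in idx H -> sw H l = sw H l' -> l = l'.
Proof.
move=> li l'i eq_sw; case: (ltngtP l l') => // [/(sw_ltn li l'i) | /(sw_ltn l'i li)].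
  by rewrite eq_sw ltnn.
by rewrite eq_sw ltnn.
Qed.

Lemma descent_hook_ltn (a b : nat) : (a, b) \in H -> is_descent s a -> a < b.-1.
Proof.
move=> abH /andP[_ desc_a]; have [_ lt_ab _ lt_pv] := hookP abH.
rewrite ltn_neqAle -ltnS (ltn_predK lt_ab) lt_ab andbT; apply: contraTneq desc_a => a_eq.
by rewrite {1}a_eq (ltn_predK lt_ab) -leqNgt ltnW.
Qed.

(* Otherwise three distinct hooks would end at b. *)
Lemma nonadjacent_hook_uniq (a c b : nat) : (a, b) \in H -> (c, b) \in H ->
  a != b.-1 -> c != b.-1 -> a = c.
Proof.
move=> abH cbH a_nadj c_nadj; apply/eqP; apply: contraT => a_nc.
have hs_uniq : uniq [:: (a, b); (c, b); (b.-1, b)].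
  by rewrite /= !inE !xpair_eqE !eqxx !andbT negb_or a_nc a_nadj c_nadj.
suff : 3 <= count (fun h => h.2 == b) H by rewrite (count_hooks_ending_at abH).
apply: leq_trans (count_leq_uniq_subset _ hs_uniq _); first by rewrite /= !eqxx.
by move=> h; rewrite !inE => /or3P[] /eqP ->; last exact: ne_adjacent_hook abH.
Qed.

Lemma descent_hook_uniq (a a' b : nat) : (a, b) \in H -> (a', b) \in H ->
  is_descent s a -> is_descent s a' -> a = a'.
Proof.
move=> abH a'bH da da'; apply: (nonadjacent_hook_uniq abH a'bH).
- by rewrite neq_ltn (descent_hook_ltn abH da).
- by rewrite neq_ltn (descent_hook_ltn a'bH da').
Qed.

Lemma hook_kind (a b : nat) : (a, b) \in H -> is_descent s a || (a == b.-1).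
Proof.
move=> abH; have [d dd dbH] := ne_descent_hook abH.
have [_|a_nadj] := eqVneq a b.-1; first by rewrite orbT.
by rewrite (nonadjacent_hook_uniq abH dbH a_nadj) ?dd // neq_ltn (descent_hook_ltn dbH dd).
Qed.

Lemma below_hook (a b y : nat) : (a, b) \in H -> a < y < b -> pv s y < pv s b.
Proof.
move=> abH ayb; have [a_gt0 lt_ab b_le lt_pv] := hookP abH.
rewrite ltnNge; apply/negP => le_by.
have lt_by : pv s b < pv s y.
  rewrite ltn_neqAle le_by andbT; apply/eqP => /(pv_inj s_uniq) eq_by.
  have : b = y by apply: eq_by; lia_nat.
  lia_nat.
pose P z := (a < z < b) && (pv s b < pv s z).
have P_le z : P z -> z <= b by case/andP; lia_nat.
have [z /andP[azb lt_bz] z_max] := ex_maxnP (ex_intro P y (introT andP (conj ayb lt_by))) P_le.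
(* The last point of (a, b) above pi_b is a descent, whose hook would cross (a, b). *)
have dz : is_descent s z.
  rewrite /is_descent (_ : 1 <= z < size s); last by lia_nat.
  have [lt_zb | | ->] := ltngtP z.+1 b; [| lia_nat | by []].
  apply: leq_ltn_trans lt_bz; rewrite leqNgt; apply/negP => lt_bz1.
  suff : z.+1 <= z by rewrite ltnn.
  by apply: z_max; rewrite /P lt_bz1 andbT; lia_nat.
have [c zcH] := descent_hook dz; have [_ lt_zc _ lt_pzc] := hookP zcH.
have [] := hooks_nested abH zcH (ltn_trans lt_bz lt_pzc) (inter_card_gt1 (y := z) _ _ _ _);
  lia_nat.
Qed.

Lemma descent_hooks_nested (a j c e : nat) : (a, j) \in H -> (c, e) \in H ->
  is_descent s a -> is_descent s c -> a < c < j -> e < j.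
Proof.
move=> ajH ceH da dc acj.
have [a_gt0 lt_aj j_le _] := hookP ajH; have [c_gt0 lt_ce e_le _] := hookP ceH.
have meet_aj : 1 < inter_card (size s) a j c e by apply: (inter_card_gt1 (y := c)); lia_nat.
have meet_ce : 1 < inter_card (size s) c e a j by apply: (inter_card_gt1 (y := c)); lia_nat.
case: (ltngtP (pv s j) (pv s e)) => [lt_je | lt_ej | eq_je].
- by have [] := hooks_nested ajH ceH lt_je meet_aj; lia_nat.
- have [_ le_ej] := hooks_nested ceH ajH lt_ej meet_ce.
  by rewrite ltn_neqAle le_ej andbT; apply: contraTneq lt_ej => ->; rewrite ltnn.
- have eq_je' : j = e by apply: (pv_inj s_uniq eq_je); lia_nat.
  rewrite -eq_je' in ceH; have := descent_hook_uniq ajH ceH da dc; lia_nat.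
Qed.

Lemma inNEP (x : nat) : reflect (exists a, (a, x) \in H) (inNE H x).
Proof.
apply: (iffP hasP) => [[l li /eqP <-] | [a /hk_idxP[l li [_ <-]]]]; last by exists l.
by exists (sw H l); apply: mem_hk.
Qed.

Lemma free_notin_NE (d j x : nat) :
  (d, j) \in H -> is_descent s d -> free s H d j x -> ~~ inNE H x.
Proof.
move=> djH dd /andP[dxj /allP no_cover]; apply/inNEP => -[a' a'xH].
have [a da axH] := ne_descent_hook a'xH.
have [_ lt_dj _ _] := hookP djH; have [a_gt0 lt_ax x_le _] := hookP axH.
have [le_da le_xj] : d <= a /\ x <= j.
  apply: (hooks_nested axH djH (below_hook djH dxj)).
  by apply: (inter_card_gt1 (y := x.-1)); lia_nat.
have a_neq_d : a != d.
  apply/eqP => a_eq; rewrite a_eq in axH.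
  by have /= := congr1 snd (fst_hook_inj djH axH erefl); lia_nat.
have := no_cover (a, x) axH; rewrite /= da lt_ax leqnn implybF => /negP; apply; lia_nat.
Qed.

Lemma hits_descent_hook (x l : nat) : ~~ inNE H x -> l \in idx H -> hits s H x l ->
  is_descent s (sw H l) && (sw H l < x < ne H l).
Proof.
move=> x_nNE li /andP[/andP[_ /andP[sw_x x_ne]] _].
have x_neq : x != ne H l by apply: contraNneq x_nNE => ->; apply/hasP; exists l.
by have /orP[-> | /eqP sw_adj] := hook_kind (mem_hk li); lia_nat.
Qed.

Lemma free_hits (t x : nat) : t \in idx H -> free s H (sw H t) (ne H t) x -> hits s H x t.
Proof. by move=> ti /andP[dxj _]; rewrite /hits (below_hook (mem_hk ti) dxj) andbT; lia_nat. Qed.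

Lemma has_color_NE (x t : nat) : inNE H x -> has_color s H x t ->
  [&& t \in idx H, ~~ is_descent s (sw H t) & ne H t == x].
Proof.
move=> x_NE; rewrite /has_color x_NE => /andP[/andP[ti /eqP tx] /allP t_max].
rewrite ti tx eqxx andbT /=; apply/negP => dt.
have [lB lBi [swB neB]] := hk_idxP (ne_adjacent_hook (mem_hk ti)).
have := t_max lB lBi; rewrite neB tx eqxx leqNgt -(ltn_sw ti lBi) swB.
by rewrite (descent_hook_ltn (mem_hk ti) dt).
Qed.

Lemma has_color_free (t x : nat) : ~~ inNE H x -> t \in idx H -> is_descent s (sw H t) ->
  has_color s H x t -> free s H (sw H t) (ne H t) x.
Proof.
move=> x_nNE ti dt; rewrite /has_color (negbTE x_nNE) /=.
case: ifP => [_ /eqP t0 | _ /andP[/andP[_ hit] /allP t_min]]; first by move: ti; rewrite t0 mem_idx.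
have /andP[_ dxj] := hits_descent_hook x_nNE ti hit.
rewrite /free dxj /=; apply/allP => -[c e] ceH /=; apply/implyP => /andP[dc dcj].
apply/negP => cxe; have [l li [swl nel]] := hk_idxP ceH.
have [c_gt0 lt_ce e_le _] := hookP ceH.
have x_neq_e : x != e by apply: contraNneq x_nNE => ->; apply/inNEP; exists c.
have hit_l : hits s H x l by rewrite /hits swl nel (below_hook ceH) ?andbT; lia_nat.
have := t_min l li; rewrite hit_l swl nel /= => /orP[lt_je | /andP[_ le_cd]]; last by lia_nat.
have [] := hooks_nested (mem_hk ti) ceH lt_je (inter_card_gt1 (y := c) _ _ _ _); lia_nat.
Qed.

Lemma free_has_color (t x : nat) : t \in idx H -> is_descent s (sw H t) ->
  free s H (sw H t) (ne H t) x -> has_color s H x t.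
Proof.
move=> ti dt x_free; have tH := mem_hk ti.
have x_nNE := free_notin_NE tH dt x_free; have hit := free_hits ti x_free.
have /andP[dxj /allP no_cover] := x_free.
have x_hits : has (hits s H x) (idx H) by apply/hasP; exists t.
rewrite /has_color (negbTE x_nNE) x_hits ti hit /=; apply/allP => l li; apply/implyP => hit_l.
have /andP[dl lx] := hits_descent_hook x_nNE li hit_l.
have lH := mem_hk li; have [l_gt0 _ l_le _] := hookP lH; have [_ _ t_le _] := hookP tH.
case: (ltngtP (pv s (ne H t)) (pv s (ne H l))) => [// | lt_lt | eq_pv].
- have meet : 1 < inter_card (size s) (sw H l) (ne H l) (sw H t) (ne H t).
    by apply: (inter_card_gt1 (y := x.-1)); lia_nat.
  have [le_sw le_ne] := hooks_nested lH tH lt_lt meet.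
  have sw_neq : sw H l != sw H t.
    apply: contraTneq lt_lt => eq_sw.
    by have /= -> := congr1 snd (fst_hook_inj lH tH eq_sw); rewrite ltnn.
  have := no_cover _ lH; rewrite /= dl (_ : sw H t < sw H l < ne H t); last by lia_nat.
  by rewrite (_ : sw H l < x <= ne H l) //; lia_nat.
- have eq_ne : ne H t = ne H l by apply: (pv_inj s_uniq eq_pv); lia_nat.
  by rewrite eq_ne in tH; rewrite (descent_hook_uniq lH tH dl dt) leqnn.
Qed.

Lemma has_color_descent (t x : nat) : t \in idx H -> is_descent s (sw H t) ->
  has_color s H x t = free s H (sw H t) (ne H t) x.
Proof.
move=> ti dt; apply/idP/idP; last exact: free_has_color.
case: (boolP (inNE H x)) => [x_NE /(has_color_NE x_NE) | x_nNE]; first by rewrite dt andbF.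
exact: has_color_free.
Qed.

Lemma has_color_adjacent (t : nat) : t \in idx H -> ~~ is_descent s (sw H t) ->
  inNE H (ne H t) && has_color s H (ne H t) t.
Proof.
move=> ti t_nd; have t_NE : inNE H (ne H t) by apply/hasP; exists t.
have sw_t : sw H t = (ne H t).-1.
  by apply/eqP; have := hook_kind (mem_hk ti); rewrite (negbTE t_nd).
rewrite /has_color t_NE ti eqxx /=; apply/allP => l li; apply/implyP => /eqP ne_l.
have /orP[dl | /eqP sw_l] := hook_kind (mem_hk li).
- apply: ltnW; rewrite -(ltn_sw li ti) sw_t -ne_l.
  exact: descent_hook_ltn (mem_hk li) dl.
- by rewrite (sw_inj li ti) // sw_l sw_t ne_l.
Qed.

Lemma has_color_uniq (x t t' : nat) : has_color s H x t -> has_color s H x t' -> t = t'.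
Proof.
rewrite /has_color; case: ifP => _.
  move=> /andP[/andP[ti /eqP tx] /allP t_max] /andP[/andP[t'i /eqP t'x] /allP t'_max].
  by have := t_max t' t'i; have := t'_max t ti; rewrite tx t'x eqxx /=; lia_nat.
case: ifP => _; first by move=> /eqP -> /eqP ->.
move=> /andP[/andP[ti hit] /allP t_min] /andP[/andP[t'i hit'] /allP t'_min].
have := t_min t' t'i; have := t'_min t ti; rewrite hit hit' /=.
case: ltngtP => //= _ le_tt' le_t't; apply: (sw_inj ti t'i).
by apply/eqP; rewrite eqn_leq le_tt' le_t't.
Qed.

(* The colour of a point outside NE(H) is that of the descent hook with the
   rightmost southwest endpoint among those strictly around it. *)
Lemma has_color_exists (x : nat) : ~~ inNE H x ->
  exists2 t, has_color s H x t & (t == 0) || (t \in idx H) && is_descent s (sw H t).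
Proof.
move=> x_nNE; case x_hits: (has (hits s H x) (idx H)); last first.
  by exists 0; rewrite // /has_color (negbTE x_nNE) x_hits.
have [l li hit_l] := hasP x_hits; have /andP[dl lx] := hits_descent_hook x_nNE li hit_l.
pose P d := has (fun h => (h.1 == d) && is_descent s d && (d < x < h.2)) H.
have P_sw : P (sw H l) by apply/hasP; exists (sw H l, ne H l); rewrite ?mem_hk //= eqxx dl.
have P_le d : P d -> d <= x by case/hasP=> h _ /andP[_ /andP[/ltnW]].
case: (ex_maxnP (ex_intro P _ P_sw) P_le) => d /hasP[[d' j] djH] /= /andP[/andP[/eqP eq_d dd] dxj].
move=> d_max; subst d'; have [t ti [swt net]] := hk_idxP djH.
exists t; last by rewrite ti swt dd orbT.
rewrite (has_color_descent x ti) ?swt ?net // /free dxj /=.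
apply/allP => -[c e] ceH /=; apply/implyP => /andP[dc dcj]; apply/negP => cxe.
have x_neq_e : x != e by apply: contraNneq x_nNE => ->; apply/inNEP; exists c.
have : c <= d by apply: d_max; apply/hasP; exists (c, e); rewrite //= eqxx dc; lia_nat.
lia_nat.
Qed.

Lemma has_color_first_point : has_color s H 1 0.
Proof.
have not_NE : inNE H 1 = false by apply/negbTE/negP => /inNEP[a /hookP[]]; lia_nat.
have no_hit : has (hits s H 1) (idx H) = false.
  apply/negbTE/hasP => -[l li /andP[/andP[_ /andP[sw_lt _]] _]].
  by have [] := hookP (mem_hk li); lia_nat.
by rewrite /has_color not_NE no_hit.
Qed.

Lemma ThetaE : Theta s H = 0 :: [seq t <- idx H | is_descent s (sw H t)].
Proof.
rewrite /Theta /= ifT; last first.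
  by apply/hasP => -[k _ /andP[k_NE /(has_color_NE k_NE)]]; rewrite mem_idx.
congr (_ :: _); apply: eq_in_filter => t ti; apply/idP/idP => [|dt].
- apply: contraNT => t_nd; apply/hasP; exists (ne H t); last exact: has_color_adjacent.
  by have [] := hookP (mem_hk ti); rewrite mem_iota; lia_nat.
- by apply/hasP => -[k _ /andP[k_NE /(has_color_NE k_NE)]]; rewrite dt andbF.
Qed.

Lemma count_color_Theta (x : nat) : count (has_color s H x) (Theta s H) = ~~ inNE H x.
Proof.
case: (boolP (inNE H x)) => [x_NE | x_nNE] /=.
- apply/eqP; rewrite -leqn0 leqNgt -has_count; apply/hasP => -[t].
  rewrite ThetaE inE mem_filter => /orP[/eqP -> | /andP[dt _]] /(has_color_NE x_NE).
    by rewrite mem_idx.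
  by rewrite dt andbF.
- have [t0 t0x t0Theta] := has_color_exists x_nNE.
  have Theta_uniq : uniq (Theta s H) by apply: filter_uniq; apply: iota_uniq.
  apply: (count_eq1 Theta_uniq _ t0x) => [|t _ tx]; last exact: has_color_uniq tx t0x.
  by rewrite ThetaE inE mem_filter andbC.
Qed.

Lemma map_hk_descent_idx :
  map (hk H) [seq t <- idx H | is_descent s (sw H t)] = descent_hooks s H.
Proof. by rewrite /descent_hooks -[in RHS](map_hk_idx H) filter_map. Qed.

Lemma map_fst_descent_hooks :
  map fst (descent_hooks s H) = [seq i <- iota 1 (size s) | is_descent s i].
Proof.
apply: (irr_sorted_eq ltn_trans ltnn).
- by rewrite /descent_hooks -filter_map; apply: sorted_filter sorted_fst_hooks; apply: ltn_trans.
- by apply: sorted_filter (iota_ltn_sorted _ _); apply: ltn_trans.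
move=> d; rewrite mem_filter; apply/mapP/andP => [[[a b]] | [dd _]].
- rewrite mem_filter /= => /andP[da _] ->; split=> //.
  by move: da => /andP[/andP[a_gt0 a_lt] _]; rewrite mem_iota; lia_nat.
- by have [b dbH] := descent_hook dd; exists (d, b); rewrite // mem_filter dd.
Qed.

Lemma size_descent_hooks : size (descent_hooks s H) = ndesc s.
Proof. by rewrite -(size_map fst) map_fst_descent_hooks size_filter. Qed.

Lemma count_inNE : count (inNE H) (iota 1 (size s)) = ndesc s.
Proof.
rewrite -size_descent_hooks -size_filter -(size_map snd); apply/perm_size/uniq_perm.
- exact/filter_uniq/iota_uniq.
- rewrite map_inj_in_uniq; first exact/filter_uniq/(map_uniq uniq_fst_hooks).
  move=> [a b] [a' b'] /=; rewrite !mem_filter /= => /andP[da abH] /andP[da' a'b'H] eq_b.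
  by rewrite -eq_b in a'b'H; rewrite (descent_hook_uniq abH a'b'H da da') eq_b.
move=> x; rewrite mem_filter; apply/andP/mapP => [[/inNEP[a axH] _] | [[a b]]].
- have [d dd dxH] := ne_descent_hook axH.
  by exists (d, x); rewrite // mem_filter dd.
- rewrite mem_filter /= => /andP[_ abH] ->; split; first by apply/inNEP; exists a.
  by have [] := hookP abH; rewrite mem_iota; lia_nat.
Qed.

Lemma phiE : phi s H = q s H 0 :: map (nfree s H) (descent_hooks s H).
Proof.
rewrite /phi ThetaE /= -map_hk_descent_idx -map_comp; congr (_ :: _).
apply/eq_in_map => t; rewrite mem_filter => /andP[dt ti].
by apply: eq_count => x; rewrite /= has_color_descent.
Qed.

Lemma size_phi : size (phi s H) = (ndesc s).+1.
Proof. by rewrite phiE /= size_map size_descent_hooks. Qed.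

Lemma phi_gt0 : 0 < size s -> all (fun c => 0 < c) (phi s H).
Proof.
move=> s_gt0; rewrite phiE /= {1}/q -has_count; apply/andP; split.
  by apply/hasP; exists 1; [rewrite mem_iota; lia_nat | exact: has_color_first_point].
apply/allP => y /mapP[[d j]]; rewrite mem_filter /= => /andP[dd djH] ->.
have lt_dj := descent_hook_ltn djH dd; have [_ _ j_le _] := hookP djH.
rewrite /nfree -has_count; apply/hasP; exists d.+1; first by rewrite mem_iota; lia_nat.
rewrite /free /= (_ : d < d.+1 < j); last by lia_nat.
by apply/allP => -[c e] _ /=; apply/implyP => /andP[_ /andP[dc _]]; rewrite ltnS leqNgt dc.
Qed.

Lemma sumn_phi : sumn (phi s H) = size s - ndesc s.
Proof.
rewrite /phi /q (sumn_count_exchange (fun x t => has_color s H x t)).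
rewrite (eq_map count_color_Theta) sumn_count.
have := count_predC (inNE H) (iota 1 (size s)); rewrite count_inNE size_iota.
by move/(congr1 (subn^~ (ndesc s))); rewrite addKn => <-.
Qed.

End HookConfiguration.

Lemma nfree_phi_eq (s : seq nat) (H H' : seq (nat * nat)) (a j j' : nat) : uniq s ->
  is_VHC02 s H -> is_VHC02 s H' -> phi s H = phi s H' ->
  (a, j) \in descent_hooks s H -> (a, j') \in descent_hooks s H' ->
  nfree s H (a, j) = nfree s H' (a, j').
Proof.
move=> s_uniq H02 H'02; rewrite (phiE s_uniq H02) (phiE s_uniq H'02) => -[_ eq_nfree] ajH aj'H'.
apply: (eq_map_at_fst _ eq_nfree _ ajH aj'H' erefl).
- by rewrite (map_fst_descent_hooks H02) (map_fst_descent_hooks H'02).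
- by rewrite (map_fst_descent_hooks H'02) filter_uniq ?iota_uniq.
Qed.

(* Free points of the hook (a, j) depend only on the descent hooks to the right of
   a, and moving its northeast endpoint from j to j' frees the point j. *)
Lemma nfree_ltn (s : seq nat) (H H' : seq (nat * nat)) (a j j' : nat) : uniq s ->
  is_VHC02 s H ->
  (forall c e, a < c -> is_descent s c -> (c, e) \in H' -> (c, e) \in H) ->
  (a, j) \in H -> (a, j') \in H' -> is_descent s a -> j < j' ->
  nfree s H (a, j) < nfree s H' (a, j').
Proof.
move=> s_uniq H02 agree ajH aj'H' da lt_jj'; have [a_gt0 lt_aj j_le _] := hookP H02 ajH.
rewrite /nfree /=; apply: sub_in_count_ltn => [x _ /andP[axj /allP no_cover] | ].
  rewrite /free (_ : a < x < j'); last by lia_nat.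
  apply/allP => -[c e] ceH' /=; apply/implyP => /andP[dc acj']; apply/negP => cxe.
  have ac : a < c by lia_nat.
  have := no_cover _ (agree c e ac dc ceH'); rewrite /= dc cxe (_ : a < c < j) //; lia_nat.
exists j; first by rewrite mem_iota; lia_nat.
rewrite /free ltnn andbF andbT (_ : a < j < j') /=; last by lia_nat.
apply/allP => -[c e] ceH' /=; apply/implyP => /andP[dc acj']; apply/negP => cje.
have ac : a < c by lia_nat.
by have := descent_hooks_nested s_uniq H02 ajH (agree c e ac dc ceH') da dc; lia_nat.
Qed.

(* Right to left: once the descent hooks to the right of a agree, the number of
   free points, read off from phi, pins down the northeast endpoint of a's hook. *)
Lemma descent_hooks_agree (s : seq nat) (H H' : seq (nat * nat)) : uniq s ->
  is_VHC02 s H -> is_VHC02 s H' -> phi s H = phi s H' ->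
  forall a b, is_descent s a -> ((a, b) \in H) = ((a, b) \in H').
Proof.
move=> s_uniq H02 H'02 eq_phi a; have [k] := ubnP (size s - a).
elim: k a => // k IH a lt_k b da.
have agree c e : a < c -> is_descent s c -> ((c, e) \in H) = ((c, e) \in H').
  move=> ac dc; apply: (IH c _ e dc).
  by move: dc => /andP[/andP[_ c_lt] _]; lia_nat.
have agree_l c e : a < c -> is_descent s c -> (c, e) \in H' -> (c, e) \in H.
  by move=> ac dc; rewrite agree.
have agree_r c e : a < c -> is_descent s c -> (c, e) \in H -> (c, e) \in H'.
  by move=> ac dc; rewrite agree.
have [j ajH] := descent_hook H02 da; have [j' aj'H'] := descent_hook H'02 da.
have eq_nfree : nfree s H (a, j) = nfree s H' (a, j').
  by apply: nfree_phi_eq s_uniq H02 H'02 eq_phi _ _; rewrite mem_filter da.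
have eq_j : j = j'.
  case: (ltngtP j j') => // [lt_jj' | lt_j'j].
  - by have := nfree_ltn s_uniq H02 agree_l ajH aj'H' da lt_jj'; rewrite eq_nfree ltnn.
  - by have := nfree_ltn s_uniq H'02 agree_r aj'H' ajH da lt_j'j; rewrite eq_nfree ltnn.
rewrite -eq_j in aj'H'; apply/idP/idP => [abH | abH'].
- by rewrite (fst_hook_inj H02 abH ajH erefl).
- by rewrite (fst_hook_inj H'02 abH' aj'H' erefl).
Qed.

Lemma sub_hooks_of_descent_hooks (s : seq nat) (H H' : seq (nat * nat)) :
  is_VHC02 s H -> is_VHC02 s H' ->
  (forall a b : nat, is_descent s a -> (a, b) \in H -> (a, b) \in H') -> {subset H <= H'}.
Proof.
move=> H02 H'02 agree [a b] abH; case/orP: (hook_kind H02 abH) => [da | /eqP ->].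
  exact: agree.
have [d dd dbH] := ne_descent_hook H02 abH.
by have := ne_adjacent_hook H'02 (agree _ _ dd dbH).
Qed.

Lemma phi_inj (s : seq nat) (H H' : seq (nat * nat)) : uniq s ->
  is_VHC02 s H -> is_VHC02 s H' -> phi s H = phi s H' -> H = H'.
Proof.
move=> s_uniq H02 H'02 eq_phi; have agree := descent_hooks_agree s_uniq H02 H'02 eq_phi.
apply: (@irr_sorted_eq _ (relpre fst ltn)).
- by move=> y x z; apply: ltn_trans.
- by move=> x; apply: ltnn.
- by rewrite -sorted_map; exact: (sorted_fst_hooks H02).
- by rewrite -sorted_map; exact: (sorted_fst_hooks H'02).
move=> h; apply/idP/idP.
- by apply: (sub_hooks_of_descent_hooks H02 H'02) => a b da; rewrite agree.
- by apply: (sub_hooks_of_descent_hooks H'02 H02) => a b da; rewrite agree.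
Qed.

Theorem lemma3p1 (n : nat) (s : seq nat) :
  0 < n -> perm_eq s (iota 1 n) ->
  (forall H, is_VHC02 s H -> is_comp (ndesc s).+1 (n - ndesc s) (phi s H)) /\
  (forall H H', is_VHC02 s H -> is_VHC02 s H' -> phi s H = phi s H' -> H = H').
Proof.
move=> n_gt0 s_perm; have s_uniq : uniq s by rewrite (perm_uniq s_perm) iota_uniq.
have size_s : size s = n by rewrite (perm_size s_perm) size_iota.
split=> [H H02 | H H' H02 H'02]; last exact: phi_inj.
rewrite /is_comp (size_phi s_uniq H02) (phi_gt0 s_uniq H02) ?size_s //.
by rewrite (sumn_phi s_uniq H02) size_s !eqxx.
Qed.
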